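(* Let $T$ be a $\delta$-Jordan Lie supertriple system over a field $\mathbb{K}$ with $H^3_\delta(T,T)=0$. Then $T$ is analytically rigid, i.e. every 1-parameter formal deformation $f_t$ of $T$ is equivalent to the null deformation $f_0$.
   Context: A $\delta$-Jordan Lie supertriple system ($\delta\in\{1,-1\}$) is a $\mathbb{Z}_2$-graded vector space $T$ with a trilinear product $[\cdot,\cdot,\cdot]$ such that, for all homogeneous $a,b,c,d,e$ (with $|a|$ the degree of $a$): (A1) $|[a,b,c]|=|a|+|b|+|c|$; (A2) $[b,a,c]=-\delta(-1)^{|a||b|}[a,b,c]$; (A3) $(-1)^{|a||c|}[a,b,c]+(-1)^{|b||a|}[b,c,a]+(-1)^{|c||b|}[c,a,b]=0$; (A4) $[a,b,[c,d,e]]=[[a,b,c],d,e]+(-1)^{|c|(|a|+|b|)}[c,[a,b,d],e]+\delta(-1)^{(|a|+|b|)(|c|+|d|)}[c,d,[a,b,e]]$. A 1-parameter formal deformation of $T$ is $f_t=\sum_{i\ge0}f_i t^i$ where each $f_i:T\times T\times T\to T$ is $\mathbb{K}$-trilinear (extended $\mathbb{K}[[t]]$-trilinearly to $T[[t]]$), $f_0(x_1,x_2,x_3)=[x_1,x_2,x_3]$, and $f_t$ satisfies (A1)–(A4) with $[\cdot,\cdot,\cdot]$ replaced by $f_t$. The null deformation is the one with $f_i=0$ for all $i\ge1$ (i.e. $f_t=f_0$). Two deformations $f_t,f'_t$ are equivalent if there is $\phi_t=\sum_{i\ge0}\phi_it^i$, $\phi_0=id_T$, $\phi_i:T\to T$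 $\mathbb{K}$-linear (extended $\mathbb{K}[[t]]$-linearly), with $\phi_t f_t(x_1,x_2,x_3)=f'_t(\phi_t(x_1),\phi_t(x_2),\phi_t(x_3))$ for all $x_1,x_2,x_3$. Cohomology with adjoint coefficients: let $\theta(a,b)(x)=(-1)^{|x|(|a|+|b|)}[x,a,b]$ and $D(a,b)(x)=\delta[a,b,x]$. $C^1_\delta(T,T)$ is the space of linear maps $T\to T$; $C^3_\delta(T,T)$ is the space of trilinear $f:T^3\to T$ with $f(x_2,x_1,x_3)=-\delta(-1)^{|x_1||x_2|}f(x_1,x_2,x_3)$ and $(-1)^{|x_1||x_3|}f(x_1,x_2,x_3)+(-1)^{|x_2||x_1|}f(x_2,x_3,x_1)+(-1)^{|x_3||x_2|}f(x_3,x_1,x_2)=0$. For homogeneous $f$: $d^{1}f(x_1,x_2,x_3)=(-1)^{(|f|+|x_1|)(|x_2|+|x_3|)}\theta(x_2,x_3)f(x_1)-f([x_1,x_2,x_3])+\delta(-1)^{|f|(|x_1|+|x_2|)}D(x_1,x_2)f(x_3)-\delta(-1)^{|x_2||x_3|+|f|(|x_1|+|x_3|)}\theta(x_1,x_3)f(x_2)$; $d^{3}f(x_1,\dots,x_5)=(-1)^{(|f|+|x_1|+|x_2|+|x_3|)(|x_4|+|x_5|)}\theta(x_4,x_5)f(x_1,x_2,x_3)-\delta(-1)^{(|f|+|x_1|+|x_2|)(|x_3|+|x_5|)+|x_4||x_5|}\theta(x_3,x_5)f(x_1,x_2,x_4)-\delta(-1)^{|f|(|x_1|+|x_2|)}D(x_1,x_2)f(x_3,x_4,x_5)+(-1)^{(|f|+|x_1|+|x_2|)(|x_3|+|x_4|)}D(x_3,x_4)f(x_1,x_2,x_5)+f([x_1,x_2,x_3],x_4,x_5)-f(x_1,x_2,[x_3,x_4,x_5])+(-1)^{|x_3|(|x_1|+|x_2|)}f(x_3,[x_1,x_2,x_4],x_5)+\delta(-1)^{(|x_1|+|x_2|)(|x_3|+|x_4|)}f(x_3,x_4,[x_1,x_2,x_5])$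 (extended linearly). $Z^3_\delta(T,T)=\{f\in C^3_\delta(T,T)\mid d^3f=0\}$, $B^3_\delta(T,T)=d^1C^1_\delta(T,T)$, and $H^3_\delta(T,T)=Z^3_\delta(T,T)/B^3_\delta(T,T)$. *)

From mathcomp Require Import all_boot all_order all_algebra.
Set Implicit Arguments. Unset Strict Implicit. Unset Printing Implicit Defensive.
Import GRing.Theory.
Local Open Scope ring_scope.

(* A Z_2-graded K-vector space T is modelled as T0 * T1 (T0 = even part,
   T1 = odd part); degrees are booleans (false = 0, true = 1), addition of
   degrees is xor (+), products of degrees are &&, and (-1)^e is [sg e]. *)

Section JLSTS.
Variables (K : fieldType) (T0 T1 : lmodType K).
Local Notation V := (T0 * T1)%type.

Definition sg (e : bool) : K := if e then -1 else 1.

Definition homog (d : bool) (x : V) : Prop := if d then x.1 = 0 else x.2 = 0.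

Definition pr (d : bool) (x : V) : V := if d then (0, x.2) else (x.1, 0).

Definition linear1 (g : V -> V) : Prop :=
  forall (k : K) (x y : V), g (k *: x + y) = k *: g x + g y.

Definition trilinear (f : V -> V -> V -> V) : Prop :=
  (forall (k : K) (x y b c : V), f (k *: x + y) b c = k *: f x b c + f y b c) /\
  (forall (k : K) (a x y c : V), f a (k *: x + y) c = k *: f a x c + f a y c) /\
  (forall (k : K) (a b x y : V), f a b (k *: x + y) = k *: f a b x + f a b y).

(* Conditions (A1)-(A4) for a ternary product [br] on a carrier U with a notion
   of homogeneity [hom], addition [add] and K-scaling [scl]; they are used
   both for T (U = V) and for T[[t]] (U = nat -> V). *)
Section TripleLaws.
Variables (U : Type) (hom : bool -> U -> Prop) (add : U -> U -> U)
          (scl : K -> U -> U) (zero : U) (delta : K) (br : U -> U -> U -> U).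

Definition axA1 : Prop := forall a b c da db dc,
  hom da a -> hom db b -> hom dc c -> hom (da (+) db (+) dc) (br a b c).

Definition axA2 : Prop := forall a b c da db dc,
  hom da a -> hom db b -> hom dc c ->
  br b a c = scl (- delta * sg (da && db)) (br a b c).

Definition axA3 : Prop := forall a b c da db dc,
  hom da a -> hom db b -> hom dc c ->
  add (add (scl (sg (da && dc)) (br a b c)) (scl (sg (db && da)) (br b c a)))
      (scl (sg (dc && db)) (br c a b)) = zero.

Definition axA4 : Prop := forall a b c d e da db dc dd de,
  hom da a -> hom db b -> hom dc c -> hom dd d -> hom de e ->
  br a b (br c d e) =
  add (add (br (br a b c) d e)
           (scl (sg (dc && (da (+) db))) (br c (br a b d) e)))
      (scl (delta * sg ((da (+) db) && (dc (+) dd))) (br c d (br a b e))).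
End TripleLaws.

Definition JLSTS (delta : K) (br : V -> V -> V -> V) : Prop :=
  trilinear br /\
  axA1 homog br /\
  axA2 homog (fun k x => k *: x) delta br /\
  axA3 homog +%R (fun k x => k *: x) 0 br /\
  axA4 homog +%R (fun k x => k *: x) delta br.

Definition ser := nat -> V.
Definition shom (d : bool) (s : ser) : Prop := forall n, homog d (s n).
Definition sadd (s u : ser) : ser := fun n => s n + u n.
Definition sscl (k : K) (s : ser) : ser := fun n => k *: s n.
Definition szero : ser := fun _ => 0.

(* K[[t]]-trilinear extension of f_t = sum_i f_i t^i to T[[t]] *)
Definition ext3 (f : nat -> V -> V -> V -> V) (x y z : ser) : ser := fun n =>
  \sum_(i < n.+1) \sum_(j < n.+1) \sum_(k < n.+1)
    \sum_(l < n.+1 | (i + j + k + l)%N == n) f i (x j) (y k) (z l).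

(* K[[t]]-linear extension of phi_t = sum_i phi_i t^i to T[[t]] *)
Definition ext1 (phi : nat -> V -> V) (x : ser) : ser := fun n =>
  \sum_(i < n.+1) \sum_(j < n.+1 | (i + j)%N == n) phi i (x j).

Definition deformation (delta : K) (br : V -> V -> V -> V)
    (f : nat -> V -> V -> V -> V) : Prop :=
  (forall i, trilinear (f i)) /\
  f 0%N = br /\
  axA1 shom (ext3 f) /\
  axA2 shom sscl delta (ext3 f) /\
  axA3 shom sadd sscl szero (ext3 f) /\
  axA4 shom sadd sscl delta (ext3 f).

Definition null_def (br : V -> V -> V -> V) : nat -> V -> V -> V -> V :=
  fun i => if i is 0%N then br else fun _ _ _ => 0.

Definition equiv_def (f f' : nat -> V -> V -> V -> V) : Prop :=
  exists phi : nat -> V -> V,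
    phi 0%N = id /\ (forall i, linear1 (phi i)) /\
    forall x1 x2 x3 : ser,
      ext1 phi (ext3 f x1 x2 x3) = ext3 f' (ext1 phi x1) (ext1 phi x2) (ext1 phi x3).

Section Cohomology.
Variables (delta : K) (br : V -> V -> V -> V).

Definition theta (da db dx : bool) (a b x : V) : V :=
  sg (dx && (da (+) db)) *: br x a b.
Definition Dop (a b x : V) : V := delta *: br a b x.

Definition comp1 (p : bool) (g : V -> V) : V -> V := fun x =>
  \sum_(d : bool) pr (d (+) p) (g (pr d x)).
Definition comp3 (p : bool) (f : V -> V -> V -> V) : V -> V -> V -> V :=
  fun x1 x2 x3 => \sum_(a : bool) \sum_(b : bool) \sum_(c : bool)
    pr (a (+) b (+) c (+) p) (f (pr a x1) (pr b x2) (pr c x3)).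

(* d^1 f for f homogeneous of degree p, on x_i homogeneous of degree d_i *)
Definition d1h (p : bool) (f : V -> V) (d1 d2 d3 : bool) (x1 x2 x3 : V) : V :=
  sg ((p (+) d1) && (d2 (+) d3)) *: theta d2 d3 (p (+) d1) x2 x3 (f x1)
  - f (br x1 x2 x3)
  + (delta * sg (p && (d1 (+) d2))) *: Dop x1 x2 (f x3)
  - (delta * sg ((d2 && d3) (+) (p && (d1 (+) d3)))) *:
      theta d1 d3 (p (+) d2) x1 x3 (f x2).

(* d^3 f for f homogeneous of degree p, on x_i homogeneous of degree d_i *)
Definition d3h (p : bool) (f : V -> V -> V -> V) (d1 d2 d3 d4 d5 : bool)
    (x1 x2 x3 x4 x5 : V) : V :=
  sg ((p (+) d1 (+) d2 (+) d3) && (d4 (+) d5)) *: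
     theta d4 d5 (p (+) d1 (+) d2 (+) d3) x4 x5 (f x1 x2 x3)
  - (delta * sg (((p (+) d1 (+) d2) && (d3 (+) d5)) (+) (d4 && d5))) *:
     theta d3 d5 (p (+) d1 (+) d2 (+) d4) x3 x5 (f x1 x2 x4)
  - (delta * sg (p && (d1 (+) d2))) *: Dop x1 x2 (f x3 x4 x5)
  + sg ((p (+) d1 (+) d2) && (d3 (+) d4)) *: Dop x3 x4 (f x1 x2 x5)
  + f (br x1 x2 x3) x4 x5
  - f x1 x2 (br x3 x4 x5)
  + sg (d3 && (d1 (+) d2)) *: f x3 (br x1 x2 x4) x5
  + (delta * sg ((d1 (+) d2) && (d3 (+) d4))) *: f x3 x4 (br x1 x2 x5).

(* linear extensions (in f and in the arguments) of d^1 and d^3 *)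
Definition d1 (f : V -> V) (x1 x2 x3 : V) : V :=
  \sum_(p : bool) \sum_(a : bool) \sum_(b : bool) \sum_(c : bool)
    d1h p (comp1 p f) a b c (pr a x1) (pr b x2) (pr c x3).

Definition d3 (f : V -> V -> V -> V) (x1 x2 x3 x4 x5 : V) : V :=
  \sum_(p : bool) \sum_(a : bool) \sum_(b : bool) \sum_(c : bool)
    \sum_(d : bool) \sum_(e : bool)
    d3h p (comp3 p f) a b c d e (pr a x1) (pr b x2) (pr c x3) (pr d x4) (pr e x5).

Definition C3 (f : V -> V -> V -> V) : Prop :=
  trilinear f /\
  (forall x1 x2 x3 e1 e2 e3, homog e1 x1 -> homog e2 x2 -> homog e3 x3 ->
     f x2 x1 x3 = (- delta * sg (e1 && e2)) *: f x1 x2 x3) /\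
  (forall x1 x2 x3 e1 e2 e3, homog e1 x1 -> homog e2 x2 -> homog e3 x3 ->
     sg (e1 && e3) *: f x1 x2 x3 + sg (e2 && e1) *: f x2 x3 x1
     + sg (e3 && e2) *: f x3 x1 x2 = 0).

Definition Z3 (f : V -> V -> V -> V) : Prop :=
  C3 f /\ forall x1 x2 x3 x4 x5, d3 f x1 x2 x3 x4 x5 = 0.
Definition B3 (f : V -> V -> V -> V) : Prop :=
  exists g : V -> V, linear1 g /\ forall x1 x2 x3, f x1 x2 x3 = d1 g x1 x2 x3.

Definition H3_zero : Prop := forall f, Z3 f -> B3 f.
End Cohomology.

End JLSTS.

From mathcomp Require Import all_boot all_order all_algebra.
From mathcomp Require Import ring zify.
From Stdlib Require Import FunctionalExtensionality ClassicalEpsilon.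
Set Implicit Arguments. Unset Strict Implicit. Unset Printing Implicit Defensive.
Import GRing.Theory.
Local Open Scope ring_scope.

(* Proof idea: kill the coefficients of the deformation one at a time.  If an
   even formal automorphism phi_t = id + phi_1 t + ... + phi_(n-1) t^(n-1) makes
   f'_t := phi_t o f_t o (phi_t^-1 x phi_t^-1 x phi_t^-1) agree with [.,.,.] below
   order n, then f'_t is again a deformation, and the t^n-coefficients of
   (A1)-(A4) say that f'_n is an even 3-cocycle.  Since H^3 = 0, f'_n = d^1 g, and
   the even part g_0 of g still satisfies f'_n = d^1 g_0; choosing phi_n := g_0
   kills the t^n-term.  The successive choices never change earlier
   coefficients, so they define a single phi_t, which is an equivalence from
   f_t to the null deformation. *)

Section Convolution.
Variable W : zmodType.
Implicit Types (F G : nat -> nat -> W) (n m : nat).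

Definition conv n F : W := \sum_(0 <= i < n.+1) F i (n - i)%N.

Lemma eq_conv_in n F G :
  (forall i, (i <= n)%N -> F i (n - i)%N = G i (n - i)%N) -> conv n F = conv n G.
Proof.
move=> FG; rewrite /conv big_nat_cond [RHS]big_nat_cond.
by apply: eq_bigr => i /andP[/andP[_ ltin] _]; apply: FG.
Qed.

Lemma eq_conv n F G : (forall i j, F i j = G i j) -> conv n F = conv n G.
Proof. by move=> FG; apply: eq_conv_in => i _; apply: FG. Qed.

Lemma conv0 F : conv 0 F = F 0%N 0%N.
Proof. by rewrite /conv big_nat1. Qed.

Lemma conv_eq0 n F : (forall i j, F i j = 0) -> conv n F = 0.
Proof. by move=> F0; rewrite /conv big1 // => i _; apply: F0. Qed.

Lemma convD n F G : conv n (fun i j => F i j + G i j) = conv n F + conv n G.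
Proof. by rewrite /conv big_split. Qed.

Lemma convC n F : conv n F = conv n (fun i j => F j i).
Proof.
rewrite /conv big_nat_rev /=; apply: eq_big_nat => i /andP[_ ltin].
by rewrite add0n subSS subKn.
Qed.

Lemma convA n (F : nat -> nat -> nat -> W) :
  conv n (fun p l => conv p (fun i j => F i j l)) =
  conv n (fun i q => conv q (fun j l => F i j l)).
Proof.
rewrite /conv.
transitivity (\sum_(0 <= p < n.+1) \sum_(0 <= i < n.+1 | (i <= p)%N)
                F i (p - i)%N (n - p)%N).
  by apply: eq_big_nat => p /andP[_ ltpn]; rewrite (big_nat_widen 0 p.+1 n.+1).
rewrite (exchange_big_dep_nat predT) //=; apply: eq_big_nat => i /andP[_ ltin].
rewrite [LHS](_ : _ = \sum_(i <= j < n.+1) F i (j - i)%N (n - j)%N); last first.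
  by rewrite [RHS](big_nat_widenl _ 0).
rewrite -{1}(add0n i) big_addn subSn //.
by apply: eq_big_nat => j _; rewrite addnK addnC subnDA.
Qed.

Lemma convAC n (F : nat -> nat -> nat -> W) :
  conv n (fun i r => conv r (fun j s => F i j s)) =
  conv n (fun j r => conv r (fun i s => F i j s)).
Proof. by rewrite -convA; under eq_conv => p s do rewrite convC; rewrite convA. Qed.

Lemma exchange_conv n m (F : nat -> nat -> nat -> nat -> W) :
  conv n (fun a b => conv m (fun c d => F a b c d)) =
  conv m (fun c d => conv n (fun a b => F a b c d)).
Proof. by rewrite /conv exchange_big. Qed.

Lemma conv_fst0 n F : (forall i j, (0 < i)%N -> F i j = 0) -> conv n F = F 0%N n.
Proof.
move=> F0; rewrite /conv big_nat_recl // big1 ?addr0 ?subn0 // => i _.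
exact: F0.
Qed.

Lemma conv_snd0 n F : (forall i j, (0 < j)%N -> F i j = 0) -> conv n F = F n 0%N.
Proof. by move=> F0; rewrite convC; apply: conv_fst0 => i j /F0. Qed.

Lemma conv_fstn n F : (forall i j, (i < n)%N -> F i j = 0) -> conv n F = F n 0%N.
Proof.
move=> F0; rewrite /conv big_nat_recr //= subnn big1_seq ?add0r // => i.
by rewrite mem_index_iota => /andP[_ ltin]; apply: F0.
Qed.

Lemma conv_ends n F : (0 < n)%N ->
  (forall i j, (0 < i < n)%N -> F i j = 0) -> conv n F = F 0%N n + F n 0%N.
Proof.
case: n => // n _ F0; rewrite /conv big_nat_recl // big_nat_recr //= subn0 subnn.
rewrite big1_seq ?add0r // => i; rewrite mem_index_iota => /andP[_ ltin].
exact: F0.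
Qed.

Lemma conv_update_ends n F G u v : (0 < n)%N ->
  (forall i, (0 < i < n)%N -> G i (n - i)%N = F i (n - i)%N) ->
  G n 0%N = F n 0%N + u -> G 0%N n = F 0%N n + v ->
  conv n G = conv n F + u + v.
Proof.
case: n => // n _ GF Gn G0; rewrite /conv big_nat_recl // big_nat_recr //=.
rewrite [in RHS]big_nat_recl // [in RHS]big_nat_recr //= !subn0 !subnn Gn G0.
rewrite (@eq_big_nat _ _ _ 0 n (fun i => G i.+1 (n.+1 - i.+1)%N)
           (fun i => F i.+1 (n.+1 - i.+1)%N)); last first.
  by move=> i /andP[_ ltin]; apply: GF.
by rewrite -!addrA; congr (_ + _); rewrite addrC -!addrA.
Qed.

Lemma big_ord_add_eq n a (G : nat -> W) :
  \sum_(j < n.+1 | (a + j == n)%N) G j = if (a <= n)%N then G (n - a)%N else 0.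
Proof.
rewrite -(big_mkord (fun j => a + j == n)%N G); case: leqP => lean.
  rewrite (eq_bigl (fun j => j == (n - a)%N)) ?big_nat1_eq.
    by rewrite leq0n /= ltnS leq_subr.
  by move=> j /=; rewrite -[RHS](eqn_add2l a) subnKC.
by rewrite big1 // => j /eqP ajn; move: lean; rewrite -ajn ltnNge leq_addr.
Qed.

Lemma big_ord_add_le n a (G : nat -> W) :
  \sum_(k < n.+1) (if (a + k <= n)%N then G k else 0) =
  if (a <= n)%N then \sum_(0 <= k < (n - a).+1) G k else 0.
Proof.
case: leqP => lean.
  rewrite (big_nat_widen 0 _ n.+1) ?ltnS ?leq_subr // big_mkord [RHS]big_mkcond.
  by apply: eq_bigr => k _; rewrite /= ltnS leq_subRL.
rewrite big1 // => k _; case: ifP => // akn; move: lean.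
by rewrite ltnNge (leq_trans (leq_addr _ _) akn).
Qed.

End Convolution.

Lemma big_bool_supp1 (W : zmodType) (G : bool -> W) d :
  G (~~ d) = 0 -> \sum_(b : bool) G b = G d.
Proof. by rewrite big_bool; case: d => -> /=; rewrite ?addr0 ?add0r. Qed.

Lemma addr_rearrange8 (W : zmodType) (a b c d e f u v : W) :
  u + v = b + a + (d + c) + (f + e) -> b + d - u + f + a - v + c + e = 0.
Proof.
move=> uv; pose G := nth 0 [:: a; b; c; d; e; f; - u; - v].
have -> : b + d - u + f + a - v + c + e = \sum_(i <- [:: 1; 3; 6; 5; 0; 7; 2; 4]%N) G i.
  by rewrite !big_cons big_nil /= !addrA addr0.
rewrite (perm_big [:: 1; 0; 3; 2; 5; 4; 6; 7]%N) // !big_cons big_nil /= addr0.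
by rewrite /G /= !addrA -addrA -opprD uv !addrA subrr.
Qed.

Section Rigidity.
Variables (K : fieldType) (T0 T1 : lmodType K).
Local Notation V := (T0 * T1)%type.
Local Notation ser := (@ser K T0 T1).
Local Notation lin := (@linear1 K T0 T1).
Local Notation hom := (@homog K T0 T1).
Local Notation shom := (@shom K T0 T1).
Local Notation sadd := (@sadd K T0 T1).
Local Notation sscl := (@sscl K T0 T1).
Local Notation szero := (@szero K T0 T1).
Implicit Types (x y z : V) (X Y Z : ser) (g : V -> V) (F : V -> V -> V -> V)
  (P Q : nat -> V -> V).

Lemma ext1_conv P X n : ext1 P X n = conv n (fun i j => P i (X j)).
Proof.
rewrite /ext1 /conv -(big_mkord xpredT (fun i => \sum_(j < n.+1 | (i + j)%N == n) P i (X j))).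
apply: eq_big_nat => i /andP[_ ltin].
by rewrite (big_ord_add_eq n i (fun j => P i (X j))) -ltnS ltin.
Qed.

Lemma ext3_conv (f : nat -> V -> V -> V -> V) X Y Z n :
  ext3 f X Y Z n =
  conv n (fun i r => conv r (fun j s => conv s (fun k l => f i (X j) (Y k) (Z l)))).
Proof.
rewrite /ext3 /conv -(big_mkord xpredT (fun i => \sum_(j < n.+1) \sum_(k < n.+1)
  \sum_(l < n.+1 | (i + j + k + l)%N == n) f i (X j) (Y k) (Z l))).
apply: eq_big_nat => i /andP[_ ltin].
transitivity (\sum_(j < n.+1) if (i + j <= n)%N then
   \sum_(0 <= k < (n - (i + j)).+1) f i (X j) (Y k) (Z (n - (i + j + k)))%N else 0).
  apply: eq_bigr => j _; rewrite -big_ord_add_le; apply: eq_bigr => k _.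
  by rewrite (big_ord_add_eq n (i + j + k) (fun l => f i (X j) (Y k) (Z l))).
rewrite (big_ord_add_le n i (fun j => \sum_(0 <= k < (n - (i + j)).+1)
                                   f i (X j) (Y k) (Z (n - (i + j + k))%N))).
rewrite -ltnS ltin; apply: eq_big_nat => j _.
by rewrite !subnDA; apply: eq_big_nat => k _; rewrite !subnDA.
Qed.

Lemma linear1_0 g : lin g -> g 0 = 0.
Proof.
move=> lin_g; have := lin_g 1 0 0; rewrite !scale1r addr0 => g0.
by apply: (addrI (g 0)); rewrite addr0 -g0.
Qed.

Lemma linear1D g : lin g -> forall x y, g (x + y) = g x + g y.
Proof. by move=> lin_g x y; have := lin_g 1 x y; rewrite !scale1r. Qed.

Lemma linear1Z g : lin g -> forall k x, g (k *: x) = k *: g x.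
Proof. by move=> lin_g k x; have := lin_g k x 0; rewrite (linear1_0 lin_g) !addr0. Qed.

Lemma linear1_sum g : lin g -> forall (I : Type) (r : seq I) (p : pred I) (G : I -> V),
  g (\sum_(i <- r | p i) G i) = \sum_(i <- r | p i) g (G i).
Proof.
move=> lin_g I r p G; elim/big_rec2: _ => [|i y1 y2 _ <-]; first exact: linear1_0.
exact: linear1D.
Qed.

Lemma linear1_conv g : lin g -> forall n G, g (conv n G) = conv n (fun i j => g (G i j)).
Proof. by move=> lin_g n G; rewrite /conv linear1_sum. Qed.

Lemma linear1_cst0 : lin (fun _ => 0).
Proof. by move=> k x y; rewrite scaler0 addr0. Qed.

Lemma linear1_comp g h : lin g -> lin h -> lin (fun x => g (h x)).
Proof. by move=> lin_g lin_h k x y; rewrite lin_h lin_g. Qed.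

Lemma linear1N g : lin g -> lin (fun x => - g x).
Proof. by move=> lin_g k x y; rewrite lin_g opprD scalerN. Qed.

Lemma linear1_sumf (I : eqType) (r : seq I) (p : pred I) (G : I -> V -> V) :
  (forall i, i \in r -> lin (G i)) -> lin (fun x => \sum_(i <- r | p i) G i x).
Proof.
move=> linG k x y; rewrite scaler_sumr -big_split /= big_seq_cond [RHS]big_seq_cond.
by apply: eq_bigr => i /andP[ri _]; apply: linG.
Qed.

Lemma trilinear_linl F : trilinear F -> forall y z, lin (fun x => F x y z).
Proof. by case=> linF _ y z k x x'; apply: linF. Qed.

Lemma trilinear_linm F : trilinear F -> forall x z, lin (fun y => F x y z).
Proof. by case=> _ [linF _] x z k y y'; apply: linF. Qed.

Lemma trilinear_linr F : trilinear F -> forall x y, lin (fun z => F x y z).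
Proof. by case=> _ [_ linF] x y k z z'; apply: linF. Qed.

Lemma trilinear0l F y z : trilinear F -> F 0 y z = 0.
Proof. by move=> triF; apply: (linear1_0 (trilinear_linl triF y z)). Qed.

Lemma trilinear0m F x z : trilinear F -> F x 0 z = 0.
Proof. by move=> triF; apply: (linear1_0 (trilinear_linm triF x z)). Qed.

Lemma trilinear0r F x y : trilinear F -> F x y 0 = 0.
Proof. by move=> triF; apply: (linear1_0 (trilinear_linr triF x y)). Qed.

Lemma trilinear_convl F : trilinear F -> forall n G y z,
  F (conv n G) y z = conv n (fun i j => F (G i j) y z).
Proof. by move=> triF n G y z; rewrite (linear1_conv (trilinear_linl triF y z)). Qed.

Lemma trilinear_convm F : trilinear F -> forall n G x z,
  F x (conv n G) z = conv n (fun i j => F x (G i j) z).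
Proof. by move=> triF n G x z; rewrite (linear1_conv (trilinear_linm triF x z)). Qed.

Lemma trilinear_convr F : trilinear F -> forall n G x y,
  F x y (conv n G) = conv n (fun i j => F x y (G i j)).
Proof. by move=> triF n G x y; rewrite (linear1_conv (trilinear_linr triF x y)). Qed.

Lemma conv_trilinear m (G : nat -> nat -> V -> V -> V -> V) :
  (forall i j, trilinear (G i j)) ->
  trilinear (fun x y z => conv m (fun i j => G i j x y z)).
Proof.
have convZD k (A B : nat -> nat -> V) :
    conv m (fun i j => k *: A i j + B i j) = k *: conv m A + conv m B.
  by rewrite convD /conv scaler_sumr.
move=> triG; split; [|split] => k a b c d; rewrite -convZD; apply: eq_conv => i j.
- by case: (triG i j).
- by case: (triG i j) => _ [].
- by case: (triG i j) => _ [].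
Qed.

Lemma trilinear_comp F A B C : trilinear F -> lin A -> lin B -> lin C ->
  trilinear (fun x y z => F (A x) (B y) (C z)).
Proof.
move=> [F1 [F2 F3]] linA linB linC; split; [|split] => k a b c d /=.
- by rewrite linA F1.
- by rewrite linB F2.
- by rewrite linC F3.
Qed.

Lemma linear1_comp_trilinear g F : lin g -> trilinear F ->
  trilinear (fun x y z => g (F x y z)).
Proof.
move=> lin_g [F1 [F2 F3]]; split; [|split] => k a b c d /=.
- by rewrite F1 lin_g.
- by rewrite F2 lin_g.
- by rewrite F3 lin_g.
Qed.

Lemma trilinearD F G : trilinear F -> trilinear G ->
  trilinear (fun x y z => F x y z + G x y z).
Proof.
move=> [F1 [F2 F3]] [G1 [G2 G3]]; split; [|split] => k a b c d /=.
- by rewrite F1 G1 scalerDr addrACA.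
- by rewrite F2 G2 scalerDr addrACA.
- by rewrite F3 G3 scalerDr addrACA.
Qed.

Lemma trilinearB F G : trilinear F -> trilinear G ->
  trilinear (fun x y z => F x y z - G x y z).
Proof.
move=> [F1 [F2 F3]] [G1 [G2 G3]]; split; [|split] => k a b c d /=.
- by rewrite F1 G1 scalerDr scalerN opprD addrACA.
- by rewrite F2 G2 scalerDr scalerN opprD addrACA.
- by rewrite F3 G3 scalerDr scalerN opprD addrACA.
Qed.

Lemma homog0 d : hom d 0. Proof. by case: d. Qed.

Lemma homogD d x y : hom d x -> hom d y -> hom d (x + y).
Proof. by case: d => /= -> ->; rewrite addr0. Qed.

Lemma homogZ d k x : hom d x -> hom d (k *: x).
Proof. by case: d => /= ->; rewrite scaler0. Qed.

Lemma homogN d x : hom d x -> hom d (- x).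
Proof. by case: d => /= ->; rewrite oppr0. Qed.

Lemma homogB d x y : hom d x -> hom d y -> hom d (x - y).
Proof. by move=> hx hy; apply/homogD/homogN. Qed.

Lemma homog_sum d (I : Type) (r : seq I) (p : pred I) (G : I -> V) :
  (forall i, p i -> hom d (G i)) -> hom d (\sum_(i <- r | p i) G i).
Proof. by move=> hG; elim/big_ind: _ => //; [exact: homog0 | exact: homogD]. Qed.

Lemma homog_conv d n (G : nat -> nat -> V) :
  (forall i j, hom d (G i j)) -> hom d (conv n G).
Proof. by move=> hG; apply: homog_sum => i _; apply: hG. Qed.

Lemma homog_negb_eq0 d x : hom d x -> hom (~~ d) x -> x = 0.
Proof. by case: d x => [] [x1 x2] /= -> ->. Qed.

Lemma linear1_pr d : lin (@pr K T0 T1 d).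
Proof.
by case: d => k [x1 x2] [y1 y2]; apply: injective_projections => /=;
  rewrite ?scaler0 ?addr0.
Qed.

Lemma homog_pr d x : hom d (pr d x).
Proof. by case: d. Qed.

Lemma pr_homog d x : hom d x -> pr d x = x.
Proof. by case: d x => [] [x1 x2] /= ->. Qed.

Lemma pr_homogN d x : hom d x -> pr (~~ d) x = 0.
Proof. by case: d x => [] [x1 x2] /= ->. Qed.

Lemma add_pr x : pr false x + pr true x = x.
Proof.
by case: x => x1 x2; apply: injective_projections => /=; rewrite ?addr0 ?add0r.
Qed.

Lemma linear1_homog_ext g h : lin g -> lin h ->
  (forall d x, hom d x -> g x = h x) -> forall x, g x = h x.
Proof.
move=> lin_g lin_h gh x; rewrite -(add_pr x) (linear1D lin_g) (linear1D lin_h).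
by rewrite !(gh _ _ (homog_pr _ _)).
Qed.

Lemma trilinear_homog_ext F G : trilinear F -> trilinear G ->
  (forall a b c x y z, hom a x -> hom b y -> hom c z -> F x y z = G x y z) ->
  forall x y z, F x y z = G x y z.
Proof.
move=> triF triG FG x y z.
apply: (linear1_homog_ext (trilinear_linl triF y z) (trilinear_linl triG y z)) => a x' hx.
apply: (linear1_homog_ext (trilinear_linm triF x' z) (trilinear_linm triG x' z)) => b y' hy.
apply: (linear1_homog_ext (trilinear_linr triF x' y') (trilinear_linr triG x' y')) => c z' hz.
exact: FG hx hy hz.
Qed.

Definition even_map g := forall d x, hom d x -> hom d (g x).

Lemma even_map_cst0 : even_map (fun _ => 0).
Proof. by move=> d x _; apply: homog0. Qed.

Lemma ext1_sadd P (X Y : ser) : (forall i, lin (P i)) ->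
  ext1 P (sadd X Y) = sadd (ext1 P X) (ext1 P Y).
Proof.
move=> linP; apply: functional_extensionality => n.
by rewrite /sadd !ext1_conv -convD; apply: eq_conv => i j; apply: linear1D.
Qed.

Lemma ext1_sscl P k (X : ser) : (forall i, lin (P i)) ->
  ext1 P (sscl k X) = sscl k (ext1 P X).
Proof.
move=> linP; apply: functional_extensionality => n.
rewrite /sscl !ext1_conv /conv scaler_sumr; apply: eq_bigr => i _.
exact: linear1Z.
Qed.

Lemma ext1_szero P : (forall i, lin (P i)) -> ext1 P szero = szero.
Proof.
move=> linP; apply: functional_extensionality => n.
by rewrite ext1_conv; apply: conv_eq0 => i j; apply: linear1_0.
Qed.

Lemma ext1_shom P d (X : ser) : (forall i, even_map (P i)) -> shom d X -> shom d (ext1 P X).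
Proof.
by move=> evP hX n; rewrite ext1_conv; apply: homog_conv => i j; apply/evP/hX.
Qed.

(** * Formal automorphisms and transport of deformations *)

Definition op_comp P Q : nat -> V -> V := fun n x => conv n (fun i j => P i (Q j x)).

Definition op_set P n g : nat -> V -> V := fun i => if i == n then g else P i.

Lemma ext1_op_comp P Q X n : (forall i, lin (P i)) ->
  ext1 P (ext1 Q X) n = ext1 (op_comp P Q) X n.
Proof.
move=> linP; rewrite !ext1_conv /op_comp.
by under eq_conv => i p do rewrite ext1_conv linear1_conv //; rewrite -convA.
Qed.

Fixpoint op_inv_upto P n : nat -> V -> V :=
  if n is m.+1 then
    let Q := op_inv_upto P m in
    op_set Q m.+1 (fun x => - \sum_(0 <= i < m.+1) Q i (P (m.+1 - i)%N x))
  else fun _ => id.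

Definition op_inv P n := op_inv_upto P n n.

Lemma op_inv_uptoE P n i : (i <= n)%N -> op_inv_upto P n i = op_inv P i.
Proof.
elim: n => [|n IHn]; first by rewrite leqn0 => /eqP ->.
rewrite leq_eqVlt => /orP[/eqP -> //|ltin].
by rewrite /= /op_set (ltn_eqF ltin) IHn.
Qed.

Lemma op_invS P m x :
  op_inv P m.+1 x = - \sum_(0 <= i < m.+1) op_inv P i (P (m.+1 - i)%N x).
Proof.
rewrite /op_inv /= /op_set eqxx; congr (- _).
by apply: eq_big_nat => i /andP[_ ltim]; rewrite op_inv_uptoE.
Qed.

Lemma linear1_op_inv P : (forall i, lin (P i)) -> forall n, lin (op_inv P n).
Proof.
move=> linP; elim/ltn_ind => [[|m] IHm] //.
have -> : op_inv P m.+1 = fun x => - \sum_(0 <= i < m.+1) op_inv P i (P (m.+1 - i)%N x).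
  by apply: functional_extensionality => x; rewrite op_invS.
apply/linear1N/linear1_sumf => i; rewrite mem_index_iota => /andP[_ ltim].
exact/linear1_comp/linP/IHm.
Qed.

Lemma even_map_op_inv P : (forall i, even_map (P i)) -> forall n, even_map (op_inv P n).
Proof.
move=> evP; elim/ltn_ind => [[|m] IHm] d x hx //.
rewrite op_invS; apply/homogN; rewrite big_seq; apply: homog_sum => i.
by rewrite mem_index_iota => /andP[_ ltim]; apply/IHm/evP.
Qed.

Lemma op_comp_inv P : P 0%N = id -> forall n x,
  op_comp (op_inv P) P n x = if n is 0 then x else 0.
Proof.
move=> P0 [|m] x; first by rewrite /op_comp conv0 P0.
by rewrite /op_comp /conv big_nat_recr //= subnn P0 op_invS subrr.
Qed.

Lemma ext1_op_invK P X : (forall i, lin (P i)) -> P 0%N = id ->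
  ext1 (op_inv P) (ext1 P X) = X.
Proof.
move=> linP P0; apply: functional_extensionality => n.
rewrite ext1_op_comp; last exact: linear1_op_inv.
rewrite ext1_conv conv_fst0 ?op_comp_inv // => -[|i] j // _.
by rewrite op_comp_inv.
Qed.

Section Transport.
Implicit Types f : nat -> V -> V -> V -> V.

Definition postcomp P f : nat -> V -> V -> V -> V :=
  fun m x y z => conv m (fun i j => P i (f j x y z)).
Definition precomp1 f Q : nat -> V -> V -> V -> V :=
  fun m x y z => conv m (fun j a => f j (Q a x) y z).
Definition precomp2 f Q : nat -> V -> V -> V -> V :=
  fun m x y z => conv m (fun j a => f j x (Q a y) z).
Definition precomp3 f Q : nat -> V -> V -> V -> V :=
  fun m x y z => conv m (fun j a => f j x y (Q a z)).

Lemma trilinear_postcomp P f m : (forall i, lin (P i)) -> (forall j, trilinear (f j)) ->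
  trilinear (postcomp P f m).
Proof.
by move=> linP trif; apply: conv_trilinear => i j; apply: linear1_comp_trilinear.
Qed.

Lemma trilinear_precomp1 f Q m : (forall j, trilinear (f j)) -> (forall a, lin (Q a)) ->
  trilinear (precomp1 f Q m).
Proof. by move=> trif linQ; apply: conv_trilinear => j a; apply: trilinear_comp. Qed.

Lemma trilinear_precomp2 f Q m : (forall j, trilinear (f j)) -> (forall a, lin (Q a)) ->
  trilinear (precomp2 f Q m).
Proof. by move=> trif linQ; apply: conv_trilinear => j a; apply: trilinear_comp. Qed.

Lemma trilinear_precomp3 f Q m : (forall j, trilinear (f j)) -> (forall a, lin (Q a)) ->
  trilinear (precomp3 f Q m).
Proof. by move=> trif linQ; apply: conv_trilinear => j a; apply: trilinear_comp. Qed.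

Lemma ext3_postcomp P f X Y Z n : (forall i, lin (P i)) ->
  ext3 (postcomp P f) X Y Z n = ext1 P (ext3 f X Y Z) n.
Proof.
move=> linP.
have -> : ext1 P (ext3 f X Y Z) n = conv n (fun i q => conv q (fun j' r =>
    conv r (fun j s => conv s (fun k l => P i (f j' (X j) (Y k) (Z l)))))).
  rewrite ext1_conv; apply: eq_conv => i p; rewrite ext3_conv linear1_conv //.
  apply: eq_conv => j' r; rewrite linear1_conv //; apply: eq_conv => j s.
  by rewrite linear1_conv.
rewrite ext3_conv /postcomp.
under eq_conv => m r do under eq_conv => j s do rewrite exchange_conv.
by under eq_conv => m r do rewrite exchange_conv; rewrite convA.
Qed.

Lemma ext3_precomp1 f Q X Y Z n : (forall j, trilinear (f j)) ->
  ext3 (precomp1 f Q) X Y Z n = ext3 f (ext1 Q X) Y Z n.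
Proof.
move=> trif.
have -> : ext3 f (ext1 Q X) Y Z n = conv n (fun j' r => conv r (fun a q =>
    conv q (fun j s => conv s (fun k l => f j' (Q a (X j)) (Y k) (Z l))))).
  rewrite ext3_conv; apply: eq_conv => j' r.
  under eq_conv => p s do under eq_conv => k l do
    rewrite ext1_conv trilinear_convl //.
  by under eq_conv => p s do rewrite exchange_conv; rewrite convA.
rewrite ext3_conv /precomp1.
under eq_conv => m r do under eq_conv => j s do rewrite exchange_conv.
by under eq_conv => m r do rewrite exchange_conv; rewrite convA.
Qed.

Lemma ext3_precomp2 f Q X Y Z n : (forall j, trilinear (f j)) ->
  ext3 (precomp2 f Q) X Y Z n = ext3 f X (ext1 Q Y) Z n.
Proof.
move=> trif.
have -> : ext3 f X (ext1 Q Y) Z n = conv n (fun j' r => conv r (fun j s =>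
    conv s (fun b q => conv q (fun k l => f j' (X j) (Q b (Y k)) (Z l))))).
  rewrite ext3_conv; apply: eq_conv => j' r; apply: eq_conv => j s.
  by under eq_conv => p l do rewrite ext1_conv trilinear_convm //; rewrite convA.
rewrite ext3_conv /precomp2.
under eq_conv => m r do under eq_conv => j s do rewrite exchange_conv.
under eq_conv => m r do rewrite exchange_conv.
by rewrite convA; apply: eq_conv => j' q; rewrite convAC.
Qed.

Lemma ext3_precomp3 f Q X Y Z n : (forall j, trilinear (f j)) ->
  ext3 (precomp3 f Q) X Y Z n = ext3 f X Y (ext1 Q Z) n.
Proof.
move=> trif.
have -> : ext3 f X Y (ext1 Q Z) n = conv n (fun j' r => conv r (fun j s =>
    conv s (fun k p => conv p (fun c l => f j' (X j) (Y k) (Q c (Z l)))))).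
  rewrite ext3_conv; apply: eq_conv => j' r; apply: eq_conv => j s.
  by under eq_conv => k p do rewrite ext1_conv trilinear_convr //.
rewrite ext3_conv /precomp3.
under eq_conv => m r do under eq_conv => j s do rewrite exchange_conv.
under eq_conv => m r do rewrite exchange_conv.
rewrite convA; apply: eq_conv => j' q.
by rewrite convAC; apply: eq_conv => j r; rewrite convAC.
Qed.

Variables (f : nat -> V -> V -> V -> V) (P : nat -> V -> V).
Hypotheses (trif : forall i, trilinear (f i)) (P0 : P 0%N = id)
  (linP : forall i, lin (P i)) (evP : forall i, even_map (P i)).

(* The deformation [P o f o (P^-1 x P^-1 x P^-1)], equivalent to [f] via [P]. *)
Definition transport : nat -> V -> V -> V -> V :=
  let Q := op_inv P in postcomp P (precomp3 (precomp2 (precomp1 f Q) Q) Q).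

Let linQ : forall i, lin (op_inv P i). Proof. exact: linear1_op_inv. Qed.

Lemma trilinear_transport m : trilinear (transport m).
Proof.
apply: trilinear_postcomp => // j; apply: trilinear_precomp3 => // k.
by apply: trilinear_precomp2 => // l; apply: trilinear_precomp1.
Qed.


Lemma ext3_transport X Y Z : ext3 transport X Y Z =
  ext1 P (ext3 f (ext1 (op_inv P) X) (ext1 (op_inv P) Y) (ext1 (op_inv P) Z)).
Proof.
apply: functional_extensionality => n; rewrite /transport ext3_postcomp //.
congr (ext1 P _ n); apply: functional_extensionality => p.
have triQ1 j : trilinear (precomp1 f (op_inv P) j) by apply: trilinear_precomp1.
have triQ2 j : trilinear (precomp2 (precomp1 f (op_inv P)) (op_inv P) j).
  exact: trilinear_precomp2.
by rewrite ext3_precomp3 // ext3_precomp2 // ext3_precomp1.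
Qed.

Lemma ext1_ext3_transport X Y Z :
  ext1 P (ext3 f X Y Z) = ext3 transport (ext1 P X) (ext1 P Y) (ext1 P Z).
Proof. by rewrite ext3_transport !ext1_op_invK. Qed.

Lemma transport_axA1 : axA1 shom (ext3 f) -> axA1 shom (ext3 transport).
Proof.
move=> A1f a b c da db dc ha hb hc; rewrite ext3_transport; apply: ext1_shom => //.
by apply: A1f; apply: ext1_shom => //; apply: even_map_op_inv.
Qed.

Lemma transport_axA2 delta :
  axA2 shom sscl delta (ext3 f) -> axA2 shom sscl delta (ext3 transport).
Proof.
move=> A2f a b c da db dc ha hb hc; rewrite !ext3_transport -ext1_sscl //.
by rewrite (A2f _ _ _ da db dc) //; apply: ext1_shom => //; apply: even_map_op_inv.
Qed.

Lemma transport_axA3 :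
  axA3 shom sadd sscl szero (ext3 f) -> axA3 shom sadd sscl szero (ext3 transport).
Proof.
move=> A3f a b c da db dc ha hb hc.
rewrite !ext3_transport -!ext1_sscl // -!ext1_sadd // (A3f _ _ _ da db dc) ?ext1_szero //.
all: by apply: ext1_shom => //; apply: even_map_op_inv.
Qed.

Lemma transport_axA4 delta :
  axA4 shom sadd sscl delta (ext3 f) -> axA4 shom sadd sscl delta (ext3 transport).
Proof.
move=> A4f a b c d e da db dc dd de ha hb hc hd he.
rewrite !ext3_transport !ext1_op_invK // -!ext1_sscl // -!ext1_sadd //.
rewrite (A4f _ _ _ _ _ da db dc dd de) //.
all: by apply: ext1_shom => //; apply: even_map_op_inv.
Qed.

End Transport.

Definition const_ser x : ser := fun n => if n is 0 then x else 0.

Lemma shom_const_ser d x : hom d x -> shom d (const_ser x).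
Proof. by move=> hx [|k] //=; apply: homog0. Qed.

Lemma ext1_const_ser P x n : (forall i, lin (P i)) -> ext1 P (const_ser x) n = P n x.
Proof. by move=> linP; rewrite ext1_conv conv_snd0 // => i [|j] // _; apply: linear1_0. Qed.

Section ConstantSeries.
Variable f : nat -> V -> V -> V -> V.
Hypothesis trif : forall i, trilinear (f i).

Lemma ext3_const_ser12 x y Z n :
  ext3 f (const_ser x) (const_ser y) Z n = conv n (fun i r => f i x y (Z r)).
Proof.
rewrite ext3_conv; apply: eq_conv => i r.
rewrite conv_fst0; last first.
  by move=> [|j] s // _; apply: conv_eq0 => k l; apply: trilinear0l.
by rewrite conv_fst0 // => -[|k] l // _; apply: trilinear0m.
Qed.

Lemma ext3_const_ser13 x Y z n :
  ext3 f (const_ser x) Y (const_ser z) n = conv n (fun i r => f i x (Y r) z).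
Proof.
rewrite ext3_conv; apply: eq_conv => i r.
rewrite conv_fst0; last first.
  by move=> [|j] s // _; apply: conv_eq0 => k l; apply: trilinear0l.
by rewrite conv_snd0 // => k [|l] // _; apply: trilinear0r.
Qed.

Lemma ext3_const_ser23 X y z n :
  ext3 f X (const_ser y) (const_ser z) n = conv n (fun i r => f i (X r) y z).
Proof.
rewrite ext3_conv; apply: eq_conv => i r.
transitivity (conv r (fun j s => f i (X j) (const_ser y s) z)).
  by apply: eq_conv => j s; rewrite conv_snd0 // => k [|l] // _; apply: trilinear0r.
by rewrite conv_snd0 // => j [|s] // _; apply: trilinear0m.
Qed.

Lemma ext3_const_ser x y z n :
  ext3 f (const_ser x) (const_ser y) (const_ser z) n = f n x y z.
Proof. by rewrite ext3_const_ser12 conv_snd0 // => i [|r] // _; apply: trilinear0r. Qed.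

End ConstantSeries.

(* The [t^m]-coefficient of [P_t (f_t x y z) - br (P_t x) (P_t y) (P_t z)]. *)
Definition defect (br : V -> V -> V -> V) (f : nat -> V -> V -> V -> V) P m x y z : V :=
  conv m (fun i j => P i (f j x y z)) -
  conv m (fun a r => conv r (fun b c => br (P a x) (P b y) (P c z))).

(* Read off the [t^m]-coefficient of [ext1_ext3_transport] at constant series:
   below order [m], [transport f P] only contributes its constant term [br]. *)
Lemma transport_coef br f P m : (forall i, trilinear (f i)) -> P 0%N = id ->
  (forall i, lin (P i)) ->
  (forall i, (i < m)%N -> forall x y z, transport f P i x y z = null_def br i x y z) ->
  forall x y z, transport f P m x y z = null_def br m x y z + defect br f P m x y z.
Proof.
move=> trif P0 linP low x y z.
have := congr1 (fun s => s m)
  (ext1_ext3_transport trif P0 linP (const_ser x) (const_ser y) (const_ser z)).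
rewrite /= ext1_conv ext3_conv.
under eq_conv => i j do rewrite ext3_const_ser //.
have constE u : ext1 P (const_ser u) = fun a => P a u.
  by apply: functional_extensionality => a; rewrite ext1_const_ser.
rewrite !constE; set tr := transport f P.
under [in RHS]eq_conv => i r do under eq_conv => a s do under eq_conv => b c do
  rewrite -[tr i _ _ _](subrK (null_def br i (P a x) (P b y) (P c z))).
under [in RHS]eq_conv => i r do under eq_conv => a s do rewrite convD.
under [in RHS]eq_conv => i r do rewrite convD.
rewrite [in RHS]convD [X in _ = X + _]conv_fstn; last first.
  move=> i r ltim; apply: conv_eq0 => a s; apply: conv_eq0 => b c.
  by rewrite /tr low // subrr.
rewrite [X in _ = _ + X]conv_fst0; last first.
  by move=> [|i] r // _; apply: conv_eq0 => a s; apply: conv_eq0.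
by rewrite !conv0 P0 /defect => ->; rewrite addrK addrC subrK.
Qed.

(** * The leading coefficient of a deformation is an even cocycle *)

Lemma comp3_even F : trilinear F -> axA1 hom F ->
  forall p x y z, comp3 p F x y z = if p then 0 else F x y z.
Proof.
move=> triF evF p x y z; rewrite /comp3.
transitivity (\sum_(a : bool) \sum_(b : bool) \sum_(c : bool)
                (if p then 0 else F (pr a x) (pr b y) (pr c z))).
  apply: eq_bigr => a _; apply: eq_bigr => b _; apply: eq_bigr => c _.
  have hF := evF _ _ _ _ _ _ (homog_pr a x) (homog_pr b y) (homog_pr c z).
  by case: p; [rewrite addbT pr_homogN | rewrite addbF pr_homog].
case: p; first by rewrite big1 // => a _; rewrite big1 // => b _; rewrite big1.
rewrite !big_bool /=.
rewrite -!(linear1D (trilinear_linr triF _ _)) !(addrC (pr true _)) !add_pr.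
rewrite -!(linear1D (trilinear_linm triF _ _)) !(addrC (pr true _)) !add_pr.
by rewrite -!(linear1D (trilinear_linl triF _ _)) !(addrC (pr true _)) !add_pr.
Qed.

Lemma comp1_homog g p d x : lin g -> hom d x -> comp1 p g x = pr (d (+) p) (g x).
Proof.
move=> lin_g hx; rewrite /comp1 (@big_bool_supp1 _ _ d).
  by rewrite (pr_homog hx).
by rewrite pr_homogN // (linear1_0 lin_g) (linear1_0 (linear1_pr _)).
Qed.

Lemma linear1_comp1 g p : lin g -> lin (comp1 p g).
Proof.
move=> lin_g k x y; rewrite /comp1 scaler_sumr -big_split; apply: eq_bigr => d _ /=.
by rewrite (linear1_pr d) lin_g linear1_pr.
Qed.

Lemma homog_comp1 g p d x : lin g -> hom d x -> hom (d (+) p) (comp1 p g x).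
Proof. by move=> lin_g hx; rewrite (comp1_homog p lin_g hx); apply: homog_pr. Qed.

Lemma even_map_comp1 g : lin g -> even_map (comp1 false g).
Proof. by move=> lin_g d x hx; rewrite -[d]addbF; apply: homog_comp1. Qed.

Definition deriv_defect (br : V -> V -> V -> V) g x y z : V :=
  br (g x) y z + br x (g y) z + br x y (g z) - g (br x y z).

Lemma trilinear_deriv_defect br g : trilinear br -> lin g ->
  trilinear (deriv_defect br g).
Proof.
move=> tribr lin_g; apply: trilinearB; last exact: linear1_comp_trilinear.
by apply: trilinearD; [apply: trilinearD|]; apply: trilinear_comp.
Qed.

Lemma sgK s : sg K s * sg K s = 1.
Proof. by case: s; rewrite /sg /=; ring. Qed.

Section Coboundaries.
Variables (delta : K) (br : V -> V -> V -> V).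
Hypotheses (JLbr : JLSTS delta br) (delta_pm1 : delta = 1 \/ delta = -1).

Let tribr : trilinear br. Proof. by case: JLbr. Qed.
Let A1br : axA1 hom br. Proof. by case: JLbr => _ []. Qed.
Let A2br : axA2 hom (fun k x => k *: x) delta br. Proof. by case: JLbr => _ [_ []]. Qed.
Let deltaK : delta * delta = 1. Proof. by case: delta_pm1 => ->; ring. Qed.

Lemma d1h0l g p a b c y z : lin g -> d1h delta br p g a b c 0 y z = 0.
Proof.
move=> lin_g; rewrite /d1h /theta /Dop (linear1_0 lin_g) !(trilinear0l _ _ tribr).
by rewrite (linear1_0 lin_g) !(trilinear0m _ _ tribr) !scaler0 !subr0 addr0.
Qed.

Lemma d1h0m g p a b c x z : lin g -> d1h delta br p g a b c x 0 z = 0.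
Proof.
move=> lin_g; rewrite /d1h /theta /Dop (linear1_0 lin_g) !(trilinear0l _ _ tribr).
by rewrite !(trilinear0m _ _ tribr) (linear1_0 lin_g) !scaler0 !subr0 addr0.
Qed.

Lemma d1h0r g p a b c x y : lin g -> d1h delta br p g a b c x y 0 = 0.
Proof.
move=> lin_g; rewrite /d1h /theta /Dop (linear1_0 lin_g) !(trilinear0r _ _ tribr).
by rewrite (linear1_0 lin_g) !scaler0 !subr0 addr0.
Qed.

Lemma d1_homog g a b c x y z : lin g -> hom a x -> hom b y -> hom c z ->
  d1 delta br g x y z = d1h delta br true (comp1 true g) a b c x y z
                        + d1h delta br false (comp1 false g) a b c x y z.
Proof.
move=> lin_g hx hy hz; rewrite /d1 big_bool /=; congr (_ + _).
all: rewrite (@big_bool_supp1 _ _ a); last by rewrite (pr_homogN hx);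
  apply: big1 => b' _; apply: big1 => c' _; apply/d1h0l/linear1_comp1.
all: rewrite (@big_bool_supp1 _ _ b); last by rewrite (pr_homogN hy);
  apply: big1 => c' _; apply/d1h0m/linear1_comp1.
all: rewrite (@big_bool_supp1 _ _ c); last by rewrite (pr_homogN hz);
  apply/d1h0r/linear1_comp1.
all: by rewrite (pr_homog hx) (pr_homog hy) (pr_homog hz).
Qed.

Lemma homog_d1h g p a b c x y z : lin g -> hom a x -> hom b y -> hom c z ->
  hom (a (+) b (+) c (+) p) (d1h delta br p (comp1 p g) a b c x y z).
Proof.
move=> lin_g hx hy hz; have hg := homog_comp1 p lin_g.
have hgx := A1br (hg _ _ hx) hy hz; rewrite (addbAC a p b) addbAC in hgx.
have hgy := A1br (hg _ _ hy) hx hz; rewrite (addbAC b p a) (addbC b a) addbAC in hgy.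
have hgz := A1br hx hy (hg _ _ hz); rewrite addbA in hgz.
have hgxyz := hg _ _ (A1br hx hy hz).
by rewrite /d1h /theta /Dop; repeat first [apply: homogB | apply: homogD | apply: homogZ].
Qed.

Lemma d1h_even g a b c x y z : even_map g -> hom a x -> hom b y -> hom c z ->
  d1h delta br false g a b c x y z = deriv_defect br g x y z.
Proof.
move=> ev_g hx hy hz; rewrite /d1h /theta /Dop /deriv_defect /=.
have sgE : delta * sg K (b && c) * sg K (b && (a (+) c)) * (- delta * sg K (a && b)) = -1.
  by case: delta_pm1 => ->; move: a b c {hx hy hz} => [] [] []; rewrite /sg /=; ring.
rewrite (A2br hx (ev_g _ _ hy) hz) /= !scalerA sgK mulr1 deltaK !scale1r.
rewrite addbF sgE scaleN1r opprK.
by rewrite addrAC [RHS]addrAC [X in _ = X + _]addrAC.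
Qed.

Section FirstCoefficient.
Variables (h : nat -> V -> V -> V -> V) (n : nat).
Hypotheses (trih : forall m, trilinear (h m)) (A1h : axA1 shom (ext3 h))
  (A2h : axA2 shom sscl delta (ext3 h)) (A3h : axA3 shom sadd sscl szero (ext3 h))
  (A4h : axA4 shom sadd sscl delta (ext3 h)).
Hypotheses (n_gt0 : (0 < n)%N)
  (h_low : forall m, (m < n)%N -> forall x y z, h m x y z = null_def br m x y z).

Lemma axA1_first_coef : axA1 hom (h n).
Proof.
move=> a b c da db dc ha hb hc.
have := A1h (shom_const_ser ha) (shom_const_ser hb) (shom_const_ser hc) n.
by rewrite ext3_const_ser.
Qed.

Lemma axA2_first_coef : axA2 hom (fun k x => k *: x) delta (h n).
Proof.
move=> a b c da db dc ha hb hc.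
have := congr1 (fun s => s n)
  (A2h (shom_const_ser ha) (shom_const_ser hb) (shom_const_ser hc)).
by rewrite /sscl /= !ext3_const_ser.
Qed.

Lemma axA3_first_coef : axA3 hom +%R (fun k x => k *: x) 0 (h n).
Proof.
move=> a b c da db dc ha hb hc.
have := congr1 (fun s => s n)
  (A3h (shom_const_ser ha) (shom_const_ser hb) (shom_const_ser hc)).
by rewrite /sscl /sadd /szero /= !ext3_const_ser.
Qed.

Lemma first_coef_A4_lin a b c d e x1 x2 x3 x4 x5 :
  hom a x1 -> hom b x2 -> hom c x3 -> hom d x4 -> hom e x5 ->
  br x1 x2 (h n x3 x4 x5) + h n x1 x2 (br x3 x4 x5) =
  (br (h n x1 x2 x3) x4 x5 + h n (br x1 x2 x3) x4 x5)
  + sg K (c && (a (+) b)) *: (br x3 (h n x1 x2 x4) x5 + h n x3 (br x1 x2 x4) x5)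
  + (delta * sg K ((a (+) b) && (c (+) d))) *:
      (br x3 x4 (h n x1 x2 x5) + h n x3 x4 (br x1 x2 x5)).
Proof.
move=> h1 h2 h3 h4 h5.
have := congr1 (fun s => s n) (A4h (shom_const_ser h1) (shom_const_ser h2)
  (shom_const_ser h3) (shom_const_ser h4) (shom_const_ser h5)).
have h_mid i x y z : (0 < i < n)%N -> h i x y z = 0.
  by case: i => // i /andP[_ ltin]; rewrite h_low.
have h0 x y z : h 0 x y z = br x y z by rewrite h_low.
rewrite /sscl /sadd /= !ext3_const_ser12 // ext3_const_ser23 // ext3_const_ser13 //.
rewrite !(@conv_ends _ n _ n_gt0); try by move=> i j /h_mid.
by rewrite !ext3_const_ser // !h0 => ->.
Qed.

Lemma d3h_first_coef p a b c d e x1 x2 x3 x4 x5 :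
  hom a x1 -> hom b x2 -> hom c x3 -> hom d x4 -> hom e x5 ->
  d3h delta br p (comp3 p (h n)) a b c d e x1 x2 x3 x4 x5 = 0.
Proof.
move=> h1 h2 h3 h4 h5.
rewrite /d3h !(comp3_even (trih n) axA1_first_coef) /theta /Dop.
case: p => /=.
  by rewrite !(trilinear0l _ _ tribr) !(trilinear0r _ _ tribr) !scaler0 !subr0 !addr0.
have sgE : delta * sg K ((a (+) b) && (c (+) e) (+) d && e) *
    sg K ((a (+) b (+) d) && (c (+) e)) * (- delta * sg K (c && (a (+) b (+) d))) =
    - sg K (c && (a (+) b)).
  by case: delta_pm1 => ->; move: a b c d e {h1 h2 h3 h4 h5} => [] [] [] [] [];
    rewrite /sg /=; ring.
rewrite (A2br h3 (axA1_first_coef h1 h2 h4) h5) /= !scalerA sgK mulr1 deltaK !scale1r.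
rewrite sgE (mulrC _ delta) scaleNr opprK.
by apply: addr_rearrange8; rewrite (first_coef_A4_lin h1 h2 h3 h4 h5) !scalerDr.
Qed.

Lemma Z3_first_coef : Z3 delta br (h n).
Proof.
split; first by split; [exact: trih | split; [exact: axA2_first_coef | exact: axA3_first_coef]].
move=> x1 x2 x3 x4 x5; rewrite /d3.
apply: big1 => p _; apply: big1 => a _; apply: big1 => b _; apply: big1 => c _.
by apply: big1 => d _; apply: big1 => e _; apply: d3h_first_coef; apply: homog_pr.
Qed.

Lemma first_coef_deriv_defect : H3_zero delta br ->
  exists g, [/\ lin g, even_map g & forall x y z, h n x y z = deriv_defect br g x y z].
Proof.
move=> H3; have [g [lin_g hn_d1]] := H3 (h n) Z3_first_coef.
have lin_g0 := linear1_comp1 false lin_g.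
exists (comp1 false g); split => //; first exact: even_map_comp1.
apply: trilinear_homog_ext => [|| a b c x y z hx hy hz]; first exact: trih.
  exact: trilinear_deriv_defect.
have d1E := d1_homog lin_g hx hy hz.
(* [h n] is even, so the odd component of [d1 g] vanishes. *)
have odd0 : d1h delta br true (comp1 true g) a b c x y z = 0.
  apply: homog_negb_eq0 (homog_d1h true lin_g hx hy hz) _.
  have -> : d1h delta br true (comp1 true g) a b c x y z =
            h n x y z - d1h delta br false (comp1 false g) a b c x y z.
    by rewrite hn_d1 d1E addrK.
  rewrite addbT negbK; apply: homogB; first exact: axA1_first_coef.
  by rewrite -[_ (+) _ (+) _]addbF; apply: homog_d1h.
by rewrite hn_d1 d1E odd0 add0r d1h_even //; apply: even_map_comp1.
Qed.
End FirstCoefficient. End Coboundaries.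

(** * Killing the leading coefficient *)

Lemma eq_defect br f P Q m x y z : (forall i, (i <= m)%N -> P i = Q i) ->
  defect br f P m x y z = defect br f Q m x y z.
Proof.
move=> PQ; rewrite /defect; congr (_ - _); first by apply: eq_conv_in => i lim; rewrite PQ.
apply: eq_conv_in => a lam; rewrite PQ //; apply: eq_conv_in => b lbma.
by rewrite !PQ //; lia.
Qed.

Lemma defect_op_set br f P n g x y z : (0 < n)%N -> trilinear br -> f 0%N = br ->
  P 0%N = id -> P n = (fun _ => 0) ->
  defect br f (op_set P n g) n x y z = defect br f P n x y z - deriv_defect br g x y z.
Proof.
move=> n_gt0 tribr f0 P0 Pn; set Q := op_set P n g.
have Q0 : Q 0%N = id by rewrite /Q /op_set eq_sym gtn_eqF.
have Qn : Q n = g by rewrite /Q /op_set eqxx.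
have QP i : (i < n)%N -> Q i = P i by move=> ltin; rewrite /Q /op_set ltn_eqF.
have defA : conv n (fun i j => Q i (f j x y z)) =
    conv n (fun i j => P i (f j x y z)) + g (br x y z) + 0.
  apply: conv_update_ends => //; first by move=> i /andP[_ ltin]; rewrite QP.
  - by rewrite Qn Pn f0 add0r.
  - by rewrite Q0 P0 addr0.
have defB2 : conv n (fun b c => br (Q 0%N x) (Q b y) (Q c z)) =
    conv n (fun b c => br (P 0%N x) (P b y) (P c z)) + br x (g y) z + br x y (g z).
  apply: conv_update_ends => //; first by move=> i /andP[i_gt0 ltin]; rewrite !QP //; lia.
  - by rewrite Qn Pn Q0 P0 (trilinear0m _ _ tribr) add0r.
  - by rewrite Qn Pn Q0 P0 (trilinear0r _ _ tribr) add0r.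
have defB : conv n (fun a r => conv r (fun b c => br (Q a x) (Q b y) (Q c z))) =
    conv n (fun a r => conv r (fun b c => br (P a x) (P b y) (P c z)))
    + br (g x) y z + (br x (g y) z + br x y (g z)).
  apply: conv_update_ends => //.
  - move=> a /andP[a_gt0 ltan]; rewrite QP //; apply: eq_conv_in => b lb.
    by rewrite !QP //; lia.
  - by rewrite !conv0 Qn Pn Q0 P0 (trilinear0l _ _ tribr) add0r.
  - by rewrite defB2 -addrA.
rewrite /defect defA defB /deriv_defect addr0.
set A := conv n (fun i j => _); set B := conv n (fun a r => _).
by rewrite -(addrA B) (addrA (br (g x) y z)) opprD addrA opprB (addrA (A - B)) (addrAC A).
Qed.

Section Construction.
Variables (delta : K) (br : V -> V -> V -> V) (f : nat -> V -> V -> V -> V).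
Hypotheses (JLbr : JLSTS delta br) (delta_pm1 : delta = 1 \/ delta = -1)
  (H3 : H3_zero delta br) (def_f : deformation delta br f).

Let tribr : trilinear br. Proof. by case: JLbr. Qed.
Let trif : forall i, trilinear (f i). Proof. by case: def_f. Qed.
Let f0 : f 0%N = br. Proof. by case: def_f => _ []. Qed.

Definition equiv_upto P n :=
  [/\ P 0%N = id, forall i, lin (P i), forall i, even_map (P i),
      forall i, (n <= i)%N -> P i = (fun _ => 0)
    & forall m, (m < n)%N -> forall x y z, defect br f P m x y z = 0].

Definition op_one : nat -> V -> V := op_set (fun _ _ => 0) 0 id.

Lemma equiv_upto_op_one : equiv_upto op_one 1.
Proof.
split=> [//| i | i | [|i] // _ | m].
- by rewrite /op_one /op_set; case: eqP => _; [by [] | apply: linear1_cst0].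
- by rewrite /op_one /op_set; case: eqP => _; [move=> d x | apply: even_map_cst0].
by rewrite ltnS leqn0 => /eqP -> x y z; rewrite /defect !conv0 /= f0 subrr.
Qed.

Lemma transport_null_upto P n : P 0%N = id -> (forall i, lin (P i)) ->
  (forall m, (m < n)%N -> forall x y z, defect br f P m x y z = 0) ->
  forall m, (m < n)%N -> forall x y z, transport f P m x y z = null_def br m x y z.
Proof.
move=> P0 linP defect0; elim/ltn_ind => m IHm ltmn x y z.
rewrite (@transport_coef br f P m trif P0 linP) ?defect0 ?addr0 // => i ltim.
exact/IHm/(ltn_trans ltim).
Qed.

Lemma equiv_uptoS P n : equiv_upto P n -> (0 < n)%N ->
  exists g, equiv_upto (op_set P n g) n.+1.
Proof.
move=> [P0 linP evP Phigh defect0] n_gt0.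
have low := transport_null_upto P0 linP defect0.
have [_ [_ [A1f [A2f [A3f A4f]]]]] := def_f.
have [g [lin_g ev_g hn_g]] := first_coef_deriv_defect JLbr delta_pm1
  (trilinear_transport trif linP) (transport_axA1 trif linP evP A1f)
  (transport_axA2 trif linP evP A2f) (transport_axA3 trif linP evP A3f)
  (transport_axA4 trif P0 linP evP A4f) n_gt0 low H3.
have defect_n x y z : defect br f P n x y z = deriv_defect br g x y z.
  rewrite -hn_g (@transport_coef br f P n trif P0 linP low).
  by rewrite -(prednK n_gt0) add0r.
exists g; split.
- by rewrite /op_set eq_sym gtn_eqF.
- by move=> i; rewrite /op_set; case: eqP.
- by move=> i; rewrite /op_set; case: eqP.
- by move=> i ltni; rewrite /op_set gtn_eqF // Phigh // ltnW.
move=> m; rewrite ltnS leq_eqVlt => /orP[/eqP -> | ltmn] x y z.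
  by rewrite defect_op_set ?defect_n ?subrr //; apply: Phigh.
rewrite (@eq_defect _ _ _ P) ?defect0 // => i lim.
by rewrite /op_set ltn_eqF // (leq_ltn_trans lim ltmn).
Qed.

Definition extend n (P : {P | equiv_upto P n.+1}) : {P | equiv_upto P n.+2} :=
  let: exist g eq_g :=
    constructive_indefinite_description _ (equiv_uptoS (proj2_sig P) (ltn0Sn n)) in
  exist _ (op_set (sval P) n.+1 g) eq_g.

Lemma extend_coef n (P : {P | equiv_upto P n.+1}) i :
  (i <= n)%N -> sval (extend P) i = sval P i.
Proof.
rewrite /extend; case: constructive_indefinite_description => g eq_g /= lein.
by rewrite /op_set ltn_eqF.
Qed.

Fixpoint approx k : {P | equiv_upto P k.+1} :=
  if k is k'.+1 then extend (approx k') else exist _ op_one equiv_upto_op_one.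

Lemma approx_coef k i : (i <= k)%N -> sval (approx k) i = sval (approx i) i.
Proof.
elim: k => [|k IHk]; first by rewrite leqn0 => /eqP ->.
rewrite leq_eqVlt => /orP[/eqP -> // | ltik].
by rewrite /= extend_coef // IHk.
Qed.

Definition equiv_map i := sval (approx i) i.

Lemma equiv_map_spec : [/\ equiv_map 0%N = id, forall i, lin (equiv_map i)
  & transport f equiv_map = null_def br].
Proof.
have P0 : equiv_map 0%N = id by case: (proj2_sig (approx 0)).
have linP i : lin (equiv_map i) by case: (proj2_sig (approx i)) => _ linP *; apply: linP.
split=> //; apply: functional_extensionality => m.
do 3 apply: functional_extensionality => ?.
apply: (@transport_null_upto _ m.+1 P0 linP _ m (ltnSn m)) => m' ltm'm x y z.
have [_ _ _ _ defect0] := proj2_sig (approx m).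
rewrite (@eq_defect _ _ _ (sval (approx m))) ?defect0 // => i lim.
by rewrite /equiv_map approx_coef // (leq_trans lim).
Qed.

End Construction.
End Rigidity.

Unset Implicit Arguments.

Theorem theorem4p5 (K : fieldType) (T0 T1 : lmodType K) (delta : K)
    (br : T0 * T1 -> T0 * T1 -> T0 * T1 -> T0 * T1) :
  (delta = 1 \/ delta = -1) ->
  JLSTS delta br ->
  H3_zero delta br ->
  forall f : nat -> T0 * T1 -> T0 * T1 -> T0 * T1 -> T0 * T1,
    deformation delta br f -> equiv_def f (null_def br).
Proof.
move=> delta_pm1 JLbr H3 f def_f.
have trif : forall i, trilinear (f i) by case: def_f.
have [phi0 lin_phi transport_null] := equiv_map_spec JLbr delta_pm1 H3 def_f.
exists (equiv_map JLbr delta_pm1 H3 def_f); split=> //; split=> // X Y Z.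
by rewrite (ext1_ext3_transport trif phi0 lin_phi) transport_null.
Qed.
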